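(* Let $G\in\mathcal{C}$ be different from the $4$-cycle, and let $C_1$ and $C_2$ be its two $4$-faces. Then $G$ is $(C_1\cup C_2)$-critical; moreover, a precoloring of $C_1\cup C_2$ in which, for each $i\in\{1,2\}$, the two vertices of $C_i$ of degree two in $G$ receive different colors does not extend to a proper $3$-coloring of $G$.
   Context: $\mathcal{C}$ is the class of plane graphs obtained from a cycle of length $4$ by finitely many repetitions of the following operation: given a graph whose outer face is $v_1v_2v_3v_4$ with $v_1$ and $v_3$ of degree two, add new vertices $v_2',v_3',v_4'$ and edges $v_1v_2', v_2'v_3', v_3'v_4', v_4'v_1, v_3v_3'$, and let $v_1v_2'v_3'v_4'$ be the new outer face. Each graph of $\mathcal{C}$ has two $4$-faces. All colorings are proper $3$-colorings. For a graph $G$ and subgraph $S\subseteq G$, $G$ is $S$-critical if for every proper subgraph $G''\subsetneq G$ with $S\subseteq G''$ there exists a coloring of $S$ that extends to a coloring of $G''$ but not to a coloring of $G$. *)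

From mathcomp Require Import all_boot.
Set Implicit Arguments. Unset Strict Implicit. Unset Printing Implicit Defensive.

(* A graph whose vertices are natural numbers: a (finite) list of vertices
   and an edge relation (intended symmetric, loopless, between listed vertices). *)
Record graph := Graph { gV : seq nat; gE : rel nat }.

Definition mkE (es : seq (nat * nat)) : rel nat :=
  fun x y => ((x, y) \in es) || ((y, x) \in es).

Definition deg (g : graph) (x : nat) : nat :=
  size [seq y <- undup (gV g) | gE g x y].

Definition quad := (nat * nat * nat * nat)%type.
Definition qverts (q : quad) : seq nat :=
  let: (a, b, c, d) := q in [:: a; b; c; d].

Definition cycleG (q : quad) : graph :=
  let: (a, b, c, d) := q in
  Graph [:: a; b; c; d] (mkE [:: (a, b); (b, c); (c, d); (d, a)]).

Definition gunion (g h : graph) : graph :=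
  Graph (gV g ++ gV h) (fun x y => gE g x y || gE h x y).

Definition subgraph (H G : graph) : Prop :=
  [/\ {subset gV H <= gV G},
      (forall x y, gE H x y -> gE G x y),
      (forall x y, gE H x y -> (x \in gV H) && (y \in gV H)),
      (forall x y, gE H x y = gE H y x) &
      (forall x, gE H x x = false)].

Definition same_graph (H G : graph) : Prop :=
  gV H =i gV G /\ (forall x y, gE H x y = gE G x y).

Definition proper_col (g : graph) (c : nat -> 'I_3) : Prop :=
  forall x y, gE g x y -> c x != c y.

Definition extends (S : graph) (c : nat -> 'I_3) (G : graph) : Prop :=
  exists c' : nat -> 'I_3, proper_col G c' /\ (forall x, x \in gV S -> c' x = c x).

Definition critical (G S : graph) : Prop :=
  forall H, subgraph H G -> subgraph S H -> ~ same_graph H G ->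
    exists c : nat -> 'I_3, proper_col S c /\ extends S c H /\ ~ extends S c G.

(* The class C: inC n G c1 c2 means G is obtained from a 4-cycle c1 by n
   applications of the operation, with current outer face c2. *)
Inductive inC : nat -> graph -> quad -> quad -> Prop :=
| inC_base a b c d :
    uniq [:: a; b; c; d] ->
    inC 0 (cycleG (a, b, c, d)) (a, b, c, d) (a, b, c, d)
| inC_step n G c1 o1 o2 o3 o4 v1 v3 x y z :
    inC n G c1 (o1, o2, o3, o4) ->
    (v1, v3) \in [:: (o1, o3); (o3, o1); (o2, o4); (o4, o2)] ->
    deg G v1 = 2 -> deg G v3 = 2 ->
    uniq [:: x; y; z] ->
    x \notin gV G -> y \notin gV G -> z \notin gV G ->
    inC n.+1
      (Graph (x :: y :: z :: gV G)
         (fun u w => gE G u w ||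
            mkE [:: (v1, x); (x, y); (y, z); (z, v1); (v3, y)] u w))
      c1 (v1, x, y, z).

From mathcomp Require Import all_boot.
Set Implicit Arguments. Unset Strict Implicit. Unset Printing Implicit Defensive.

(* Let u1, u2 be the degree-2 vertices of the inner face C1 and let (v1, v3) be
   a diagonal pair of the current outer face.  We say that (u1, u2) "controls"
   (v1, v3) in G when (1) every 3-coloring separating u1 and u2 identifies v1
   and v3, (2) for every edge e of G outside C1, some coloring of G - e
   separates both pairs, and (3) some coloring separates u1 and u2.  In the
   4-cycle, the degree-2 pair controls the other diagonal (a 3-coloring of C4
   giving its two opposite vertices distinct colors gives the other two the
   same color).  The key lemma [controlled_ext] says that one step of the
   construction, which glues the 5-edge gadget v1-x-y-z-v1, v3-y, turns control
   of (v1, v3) into control of the new degree-2 pair (x, z): colors of the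
   gadget are a finite problem over 'I_3, solved by enumeration.  By induction
   on the construction, (u1, u2) controls the degree-2 pair of the outer face
   C2 ([inC_inv]); control yields both the non-extendability statement and
   criticality, since a missing edge of a proper subgraph is outside C1. *)

(* The three colors, listed so that statements about colors can be checked by
   evaluation. *)
Definition colors : seq 'I_3 :=
  [:: Ordinal (isT : 0 < 3); Ordinal (isT : 1 < 3); Ordinal (isT : 2 < 3)].

Lemma mem_colors (a : 'I_3) : a \in colors.
Proof. by case: a => [[|[|[|//]]] ?]. Qed.

Lemma third_color (a b c d : 'I_3) :
  a != b -> c != a -> c != b -> d != a -> d != b -> c = d.
Proof.
have : all (fun a => all (fun b => all (fun c => all (fun d =>
  [&& a != b, c != a, c != b, d != a & d != b] ==> (c == d)) colors) colors) colors) colors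
  by [].
move=> /allP/(_ a (mem_colors a))/allP/(_ b (mem_colors b)).
move=> /allP/(_ c (mem_colors c))/allP/(_ d (mem_colors d))/implyP all_ok *.
by apply/eqP/all_ok/and5P.
Qed.

(* The five constraints on the colors of the gadget v1-x-y-z-v1, v3-y, given
   the colors a of v1 and b of v3. *)
Definition gadget_colors (a b cx cy cz : 'I_3) : seq bool :=
  [:: a != cx; cx != cy; cy != cz; cz != a; b != cy].

Lemma gadget_full (a b : 'I_3) : exists cx cy cz : 'I_3,
  all id (gadget_colors a b cx cy cz) /\ (a != b -> cx != cz).
Proof.
have : all (fun a => all (fun b => has (fun cx => has (fun cy => has (fun cz =>
   all id (gadget_colors a b cx cy cz) && ((a != b) ==> (cx != cz)))
   colors) colors) colors) colors) colors by [].
move=> /allP/(_ a (mem_colors a))/allP/(_ b (mem_colors b)).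
move=> /hasP[cx _] /hasP[cy _] /hasP[cz _] /andP[ok /implyP xz].
by exists cx, cy, cz.
Qed.

Lemma gadget_skip (a : 'I_3) (m : nat) : m < 5 -> exists cx cy cz : 'I_3,
  (forall j, j < 5 -> j != m -> nth true (gadget_colors a a cx cy cz) j) /\ cx != cz.
Proof.
have : all (fun m => all (fun a => has (fun cx => has (fun cy => has (fun cz =>
   all (fun j => (j == m) || nth true (gadget_colors a a cx cy cz) j) (iota 0 5)
   && (cx != cz)) colors) colors) colors) colors) (iota 0 5) by [].
move=> all_ok lt_m5; move/allP: all_ok => /(_ m); rewrite mem_iota => /(_ lt_m5).
move=> /allP/(_ a (mem_colors a)) /hasP[cx _] /hasP[cy _] /hasP[cz _] /andP[/allP ok xz].
exists cx, cy, cz; split=> // j lt_j5 /negbTE jm.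
by have := ok j; rewrite mem_iota jm; apply.
Qed.

Lemma gadget_forced (a cx cy cz : 'I_3) : all id (gadget_colors a a cx cy cz) -> cx = cz.
Proof.
have : all (fun a => all (fun cx => all (fun cy => all (fun cz =>
  all id (gadget_colors a a cx cy cz) ==> (cx == cz)) colors) colors) colors) colors by [].
move=> /allP/(_ a (mem_colors a))/allP/(_ cx (mem_colors cx)).
by move=> /allP/(_ cy (mem_colors cy))/allP/(_ cz (mem_colors cz))/implyP ok /ok/eqP.
Qed.

Definition proper_off (skip : rel nat) (G : graph) (c : nat -> 'I_3) : Prop :=
  forall u w, gE G u w -> ~~ skip u w -> c u != c w.

Lemma proper_offP (G : graph) c : proper_off (mkE [::]) G c <-> proper_col G c.
Proof. by split=> pc u w uw; [exact: pc | move=> _; exact: pc]. Qed.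

Lemma proper_off_col skip (G : graph) c : proper_col G c -> proper_off skip G c.
Proof. by move=> pc u w /pc. Qed.

Lemma neqF (a b : nat) : a != b -> (a == b) = false /\ (b == a) = false.
Proof. by move=> ab; rewrite (negbTE ab) eq_sym (negbTE ab). Qed.

Lemma mkE_sym es : symmetric (mkE es).
Proof. by move=> u w; rewrite /mkE orbC. Qed.

Lemma mkE_nth es u w : mkE es u w -> exists2 j, j < size es & mkE [:: nth (0, 0) es j] u w.
Proof.
rewrite /mkE => /orP[] e; [exists (index (u, w) es) | exists (index (w, u) es)];
  by rewrite ?index_mem ?nth_index ?inE ?eqxx ?orbT.
Qed.

Lemma mkE1_flip p u w : mkE [:: p] u w -> mkE [:: (u, w)] p.1 p.2.
Proof.
by case: p => a b; rewrite /mkE !inE !xpair_eqE => /orP[] /andP[/eqP-> /eqP->];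
  rewrite !eqxx ?orbT.
Qed.

Lemma mkE_vertex es u w : mkE es u w -> u \in unzip1 es ++ unzip2 es.
Proof.
rewrite /mkE mem_cat => /orP[] e; apply/orP; [left; exact: (map_f fst e) | right].
exact: (map_f snd e).
Qed.

Lemma mkE_proper_off (skip : rel nat) es (f : nat -> 'I_3) : symmetric skip ->
  (forall j, j < size es -> ~~ skip (nth (0, 0) es j).1 (nth (0, 0) es j).2 ->
     f (nth (0, 0) es j).1 != f (nth (0, 0) es j).2) ->
  forall u w, mkE es u w -> ~~ skip u w -> f u != f w.
Proof.
move=> skip_sym ok u w /mkE_nth[j lt_j]; have := ok j lt_j.
case: (nth (0, 0) es j) => a b /= ok_ab.
rewrite /mkE !inE !xpair_eqE => /orP[] /andP[/eqP-> /eqP->]; first exact: ok_ab.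
by rewrite skip_sym eq_sym.
Qed.

Lemma deg_nbrs (G : graph) t (N : seq nat) : uniq (gV G) -> uniq N -> {subset N <= gV G} ->
  (forall w, gE G t w = (w \in N)) -> deg G t = size N.
Proof.
move=> uV uN sNV nbr; rewrite /deg undup_id // (eq_filter nbr).
apply/perm_size/uniq_perm; rewrite ?filter_uniq // => w.
by rewrite mem_filter; case: (boolP (w \in N)) => // /sNV.
Qed.

Record wf_graph (G : graph) : Prop := WfGraph {
  wf_uniq : uniq (gV G);
  wf_edge : forall a b, gE G a b -> (a \in gV G) && (b \in gV G);
  wf_sym : forall a b, gE G a b = gE G b a;
  wf_nbr : forall a, a \in gV G -> exists b, gE G a b }.

Lemma wf_no_edge (G : graph) v w : wf_graph G -> v \notin gV G -> gE G v w = false.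
Proof. by move=> wfG vG; apply: contraNF vG => /(wf_edge wfG)/andP[]. Qed.

Definition gadget (v1 v3 x y z : nat) : seq (nat * nat) :=
  [:: (v1, x); (x, y); (y, z); (z, v1); (v3, y)].

Definition extG (G : graph) (v1 v3 x y z : nat) : graph :=
  Graph (x :: y :: z :: gV G) (fun u w => gE G u w || mkE (gadget v1 v3 x y z) u w).

Record controlled (G K : graph) (u1 u2 v1 v3 : nat) : Prop := Controlled {
  ctl_u1K : u1 \in gV K; ctl_u2K : u2 \in gV K; ctl_u12 : u1 != u2;
  ctl_u1G : u1 \in gV G; ctl_u2G : u2 \in gV G;
  ctl_deg1 : deg G u1 = 2; ctl_deg2 : deg G u2 = 2;
  ctl_away : (u1 \notin [:: v1; v3]) && (u2 \notin [:: v1; v3]);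
  ctl_v1G : v1 \in gV G; ctl_v3G : v3 \in gV G;
  ctl_forced : forall c, proper_col G c -> c u1 != c u2 -> c v1 = c v3;
  ctl_sharp : forall e1 e2, gE G e1 e2 -> ~~ gE K e1 e2 ->
    exists c, [/\ proper_off (mkE [:: (e1, e2)]) G c, c u1 != c u2 & c v1 != c v3];
  ctl_col : exists c, proper_col G c /\ c u1 != c u2 }.

Record outer_inv (G K : graph) (q r s u1 u2 : nat) : Prop := OuterInv {
  out_wf : wf_graph G;
  out_qs : q != s;
  out_degq : deg G q = 2; out_degs : deg G s = 2; out_degr : deg G r != 2;
  out_ctl : controlled G K u1 u2 q s }.

Section Extension.

Variables (G : graph) (v1 v3 x y z : nat).
Hypotheses (wfG : wf_graph G) (v1G : v1 \in gV G) (v3G : v3 \in gV G).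
Hypotheses (xyz : uniq [:: x; y; z])
  (xG : x \notin gV G) (yG : y \notin gV G) (zG : z \notin gV G).

Local Notation H := (extG G v1 v3 x y z).
Local Notation gad := (gadget v1 v3 x y z).

Let fresh t : t \in gV G -> (t == x) = false /\ (x == t) = false /\
  (t == y) = false /\ (y == t) = false /\ (t == z) = false /\ (z == t) = false.
Proof.
move=> tG; have [tx xt] := neqF (memPn xG t tG); have [ty yt] := neqF (memPn yG t tG).
by have [tz zt] := neqF (memPn zG t tG).
Qed.

Let new_neq : [/\ x != y, x != z & y != z].
Proof. by move: xyz; rewrite /= !inE !negb_or andbT => /andP[/andP[-> ->] ->]. Qed.

Lemma gadget_edge_old t w : t \in gV G -> t \notin [:: v1; v3] -> mkE gad t w = false.
Proof.
move=> tG; rewrite !inE negb_or => /andP[/negbTE tv1 /negbTE tv3].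
have [tx [_ [ty [_ [tz _]]]]] := fresh tG.
by apply/negbTE/negP => /mkE_vertex; rewrite /= !inE tv1 tv3 tx ty tz.
Qed.

Lemma ext_wf : wf_graph H.
Proof.
have gadV : {subset unzip1 gad ++ unzip2 gad <= gV H}.
  by apply/allP; rewrite /= !inE !eqxx v1G v3G !orbT.
split.
- move: xyz; rewrite /= !inE !negb_or xG yG zG (wf_uniq wfG) andbT.
  by move=> /andP[/andP[-> ->] ->].
- move=> a b /= /orP[/(wf_edge wfG)/andP[aG bG] | ab].
    by rewrite !inE aG bG !orbT.
  by rewrite !gadV ?(mkE_vertex ab) // (@mkE_vertex _ _ a) // mkE_sym.
- by move=> a b /=; rewrite (wf_sym wfG) mkE_sym.
- move=> a; rewrite /= !inE => /or4P[/eqP-> | /eqP-> | /eqP-> | /(wf_nbr wfG)[b ab]].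
  + by exists y; rewrite /mkE !inE !eqxx !orbT.
  + by exists z; rewrite /mkE !inE !eqxx !orbT.
  + by exists y; rewrite /mkE !inE !eqxx !orbT.
  + by exists b; rewrite ab.
Qed.

Lemma ext_nbrs : [/\ forall w, gE H x w = (w \in [:: v1; y]),
                      forall w, gE H y w = (w \in [:: x; z; v3]) &
                      forall w, gE H z w = (w \in [:: y; v1])].
Proof.
have [v1x [xv1 [v1y [yv1 [v1z zv1]]]]] := fresh v1G.
have [v3x [xv3 [v3y [yv3 [v3z zv3]]]]] := fresh v3G.
have [/neqF[xy yx] /neqF[xz zx] /neqF[yz zy]] := new_neq.
split=> w /=; rewrite wf_no_edge // /mkE !inE !xpair_eqE !eqxx;
  rewrite ?v1x ?xv1 ?v1y ?yv1 ?v1z ?zv1 ?v3x ?xv3 ?v3y ?yv3 ?v3z ?zv3 ?xy ?yx ?xz ?zx ?yz ?zy /= ?andbT ?andbF ?orbF ?orFb.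
- by rewrite orbC.
- by rewrite orbCA.
- by rewrite orbC.
Qed.

Lemma deg_ext_old t : t \in gV G -> t \notin [:: v1; v3] -> deg H t = deg G t.
Proof.
move=> tG tv; rewrite /deg !undup_id ?(wf_uniq wfG) ?(wf_uniq ext_wf) //.
rewrite (eq_filter (a2 := gE G t)) => [|w]; last by rewrite /= gadget_edge_old // orbF.
have no_new v : v \notin gV G -> gE G t v = false by rewrite (wf_sym wfG); apply: wf_no_edge.
by rewrite /= !no_new.
Qed.

Lemma deg_ext_new : [/\ deg H x = 2, deg H y = 3 & deg H z = 2].
Proof.
have [nx ny nz] := ext_nbrs; have uH := wf_uniq ext_wf.
have [_ xz _] := new_neq.
have [_ [_ [/negbT v1y _]]] := fresh v1G.
have [/negbT v3x [_ [_ [_ [/negbT v3z _]]]]] := fresh v3G.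
split; [apply: (deg_nbrs (N := [:: v1; y])) | apply: (deg_nbrs (N := [:: x; z; v3]))
      | apply: (deg_nbrs (N := [:: y; v1]))] => //.
- by rewrite /= inE v1y.
- by apply: allP; rewrite /= !inE ?v1G ?v3G !eqxx !orbT.
- by rewrite /= !inE !negb_or xz (eq_sym x) (eq_sym z) v3x v3z.
- by apply: allP; rewrite /= !inE ?v1G ?v3G !eqxx !orbT.
- by rewrite /= inE eq_sym v1y.
- by apply: allP; rewrite /= !inE ?v1G ?v3G !eqxx !orbT.
Qed.

Definition recolor (c : nat -> 'I_3) (cx cy cz : 'I_3) (t : nat) : 'I_3 :=
  if t == x then cx else if t == y then cy else if t == z then cz else c t.

Lemma recolor_old t : t \in gV G -> forall c cx cy cz, recolor c cx cy cz t = c t.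
Proof. by move=> /fresh[tx [_ [ty [_ [tz _]]]]] c cx cy cz; rewrite /recolor tx ty tz. Qed.

Lemma recolor_gadget c cx cy cz :
  [seq recolor c cx cy cz p.1 != recolor c cx cy cz p.2 | p <- gad] =
  gadget_colors (c v1) (c v3) cx cy cz.
Proof.
have [/neqF[_ yx] /neqF[_ zx] /neqF[_ zy]] := new_neq.
by rewrite /= !(recolor_old v1G, recolor_old v3G) /recolor eqxx yx zx zy !eqxx.
Qed.

Lemma ext_coloring (skip : rel nat) c cx cy cz : symmetric skip -> proper_off skip G c ->
  (forall j, j < 5 -> ~~ skip (nth (0, 0) gad j).1 (nth (0, 0) gad j).2 ->
     nth true (gadget_colors (c v1) (c v3) cx cy cz) j) ->
  proper_off skip H (recolor c cx cy cz).
Proof.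
move=> skip_sym pc ok u w /= /orP[uw | uw].
  by have /andP[uG wG] := wf_edge wfG uw; rewrite (recolor_old uG) (recolor_old wG); apply: pc.
apply: (mkE_proper_off skip_sym _ uw) => j lt_j /(ok j lt_j).
by rewrite -recolor_gadget (nth_map (0, 0)).
Qed.

Lemma ext_gadget_colors c :
  proper_col H c -> all id (gadget_colors (c v1) (c v3) (c x) (c y) (c z)).
Proof.
move=> pc; rewrite -[gadget_colors _ _ _ _ _]/[seq c p.1 != c p.2 | p <- gad] all_map.
by apply/allP => -[a b] ab; apply: pc; rewrite /= /mkE ab !orbT.
Qed.

Lemma recolor_x c cx cy cz : recolor c cx cy cz x = cx.
Proof. by rewrite /recolor eqxx. Qed.

Lemma recolor_z c cx cy cz : recolor c cx cy cz z = cz.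
Proof. by have [_ /neqF[_ zx] /neqF[_ zy]] := new_neq; rewrite /recolor zx zy eqxx. Qed.

Lemma ext_restrict c : proper_col H c -> proper_col G c.
Proof. by move=> pc u w uw; apply: pc; rewrite /= uw. Qed.

Lemma ext_forced u1 u2 : (forall c, proper_col G c -> c u1 != c u2 -> c v1 = c v3) ->
  forall c, proper_col H c -> c u1 != c u2 -> c x = c z.
Proof.
move=> forced c pc cu; have cv := forced c (ext_restrict pc) cu.
by apply: (@gadget_forced (c v1) _ (c y)); rewrite {2}cv; apply: ext_gadget_colors.
Qed.

Lemma ext_colorable u1 u2 : u1 \in gV G -> u2 \in gV G ->
  (exists c, proper_col G c /\ c u1 != c u2) -> exists c, proper_col H c /\ c u1 != c u2.
Proof.
move=> u1G u2G [c [pc cu]].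
have [cx [cy [cz [/all_nthP ok _]]]] := gadget_full (c v1) (c v3).
exists (recolor c cx cy cz); rewrite (recolor_old u1G) (recolor_old u2G); split=> //.
apply/proper_offP/ext_coloring => [|| j lt_j _]; [exact: mkE_sym | exact/proper_offP | exact: ok].
Qed.

(* Property (2) of control passes from (v1, v3) to (x, z): for an old edge
   extend the old coloring of G - e, for a gadget edge recolor the gadget of a
   proper coloring of G. *)
Lemma ext_sharp K u1 u2 : controlled G K u1 u2 v1 v3 ->
  forall e1 e2, gE H e1 e2 -> ~~ gE K e1 e2 ->
  exists c, [/\ proper_off (mkE [:: (e1, e2)]) H c, c u1 != c u2 & c x != c z].
Proof.
move=> ctl e1 e2 /= /orP[old | new] notK.
- have [c [pc cu cv]] := ctl_sharp ctl old notK.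
  have [cx [cy [cz [/all_nthP ok xz]]]] := gadget_full (c v1) (c v3).
  exists (recolor c cx cy cz).
  rewrite (recolor_old (ctl_u1G ctl)) (recolor_old (ctl_u2G ctl)) recolor_x recolor_z xz //.
  by split=> //; apply: ext_coloring => // [|j lt_j _]; [exact: mkE_sym | exact: ok].
- have [c [pc cu]] := ctl_col ctl; have cv := ctl_forced ctl pc cu.
  have [m lt_m em] := mkE_nth new.
  have [cx [cy [cz [ok xz]]]] := gadget_skip (c v1) lt_m.
  exists (recolor c cx cy cz).
  rewrite (recolor_old (ctl_u1G ctl)) (recolor_old (ctl_u2G ctl)) recolor_x recolor_z.
  split=> //; apply: ext_coloring => [|| j lt_j]; [exact: mkE_sym | exact: proper_off_col |].
  have [-> | jm] := eqVneq j m; first by rewrite mkE1_flip.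
  by rewrite -cv => _; apply: ok.
Qed.

Lemma controlled_ext K u1 u2 : controlled G K u1 u2 v1 v3 -> controlled H K u1 u2 x z.
Proof.
move=> ctl; have [u1G u2G] := (ctl_u1G ctl, ctl_u2G ctl).
have inH t : t \in gV G -> t \in gV H by move=> tG; rewrite /= !inE tG !orbT.
have away : (u1 \notin [:: x; z]) && (u2 \notin [:: x; z]).
  have [ux [_ [_ [_ [uz _]]]]] := fresh u1G; have [wx [_ [_ [_ [wz _]]]]] := fresh u2G.
  by rewrite !inE ux uz wx wz.
have /andP[u1away u2away] := ctl_away ctl.
split=> //.
- exact: ctl_u1K ctl.
- exact: ctl_u2K ctl.
- exact: ctl_u12 ctl.
- exact: inH.
- exact: inH.
- by rewrite deg_ext_old //; exact: ctl_deg1 ctl.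
- by rewrite deg_ext_old //; exact: ctl_deg2 ctl.
- by rewrite /= inE eqxx.
- by rewrite /= !inE eqxx !orbT.
- exact: ext_forced (ctl_forced ctl).
- exact: ext_sharp.
- exact: ext_colorable (ctl_col ctl).
Qed.

Lemma inv_ext K u1 u2 : controlled G K u1 u2 v1 v3 -> outer_inv H K x y z u1 u2.
Proof.
move=> ctl; have [dx dy dz] := deg_ext_new; have [_ xz _] := new_neq.
by split; rewrite ?dy //; [exact: ext_wf | exact: controlled_ext].
Qed.

End Extension.

Lemma controlled_sym G K u1 u2 v1 v3 :
  controlled G K u1 u2 v1 v3 -> controlled G K u1 u2 v3 v1.
Proof.
case=> u1K u2K u12 u1G u2G deg1 deg2 away v1G v3G forced sharp col; constructor=> //.
- by move: away; rewrite !inE !(orbC (_ == v1)).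
- by move=> c pc cu; rewrite (forced c).
- move=> e1 e2 e nK; have [c [pc cu cv]] := sharp e1 e2 e nK.
  by exists c; split; rewrite // eq_sym.
Qed.

(* A step of the construction is applied at a diagonal pair of degree-2
   vertices, which must be the controlled pair (q, s). *)
Lemma inv_step G K p q r s u1 u2 v1 v3 : outer_inv G K q r s u1 u2 ->
  (v1, v3) \in [:: (p, r); (r, p); (q, s); (s, q)] -> deg G v1 = 2 -> deg G v3 = 2 ->
  controlled G K u1 u2 v1 v3.
Proof.
case=> _ _ _ _ degr ctl; rewrite !inE !xpair_eqE.
case/or4P=> /andP[/eqP-> /eqP->] d1 d3; first (by rewrite d3 in degr);
  first (by rewrite d1 in degr); [exact: ctl | exact: controlled_sym].
Qed.

Lemma cycle_controlled (G : graph) a b c d : uniq [:: a; b; c; d] -> uniq (gV G) ->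
  gV G =i [:: a; b; c; d] -> gE G =2 mkE [:: (a, b); (b, c); (c, d); (d, a)] ->
  controlled G G b d a c.
Proof.
move=> abcd uG VG EG.
have := abcd; rewrite /= !inE !negb_or => /and4P[/and3P[ab ac ad] /andP[bc bd] cd _].
have [[abF baF] [acF caF]] := (neqF ab, neqF ac); have [adF daF] := neqF ad.
have [[bcF cbF] [bdF dbF]] := (neqF bc, neqF bd); have [cdF dcF] := neqF cd.
have nbr t : t \in [:: b; d] -> forall w, gE G t w = (w \in [:: a; c]).
  rewrite !inE => /orP[] /eqP-> w; rewrite EG /mkE !inE !xpair_eqE;
  by rewrite ?abF ?baF ?acF ?caF ?adF ?daF ?bcF ?cbF ?bdF ?dbF ?cdF ?dcF !eqxx
    /= ?andbT ?andbF ?orbF ?orFb // orbC.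
have adj t w : t \in [:: a; c] -> w \in [:: b; d] -> gE G t w.
  by move=> tac wbd; rewrite EG mkE_sym -EG nbr.
have [aG bG cG dG] : [/\ a \in gV G, b \in gV G, c \in gV G & d \in gV G].
  by rewrite !VG !inE !eqxx !orbT.
have acG : {subset [:: a; c] <= gV G} by move=> t; rewrite !inE => /orP[] /eqP->.
constructor=> //.
- by apply: (deg_nbrs (N := [:: a; c])) => //; [rewrite /= inE ac | apply: nbr; rewrite !inE eqxx].
- by apply: (deg_nbrs (N := [:: a; c])) => //; [rewrite /= inE ac | apply: nbr; rewrite !inE eqxx orbT].
- by rewrite !inE baF bcF daF dcF.
- move=> col pc cbd; apply: (third_color cbd); apply: pc; apply: adj;
    by rewrite !inE eqxx ?orbT.
- by move=> e1 e2 ->.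
- pose col t : 'I_3 := if t == b then Ordinal (isT : 1 < 3)
                      else if t == d then Ordinal (isT : 2 < 3) else Ordinal (isT : 0 < 3).
  exists col; split; last by rewrite /col eqxx dbF eqxx.
  move=> u w; rewrite EG /mkE !inE !xpair_eqE => /orP[] /or4P[] /andP[/eqP-> /eqP->];
    by rewrite /col ?eqxx ?abF ?baF ?acF ?caF ?adF ?daF ?bcF ?cbF ?bdF ?dbF ?cdF ?dcF.
Qed.

Lemma cycle_wf a b c d : uniq [:: a; b; c; d] -> wf_graph (cycleG (a, b, c, d)).
Proof.
move=> abcd; split=> //.
- have ends : all (mem [:: a; b; c; d])
      (unzip1 [:: (a, b); (b, c); (c, d); (d, a)] ++ unzip2 [:: (a, b); (b, c); (c, d); (d, a)]).
    by rewrite /= !inE !eqxx !orbT.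
  move=> u w uw; apply/andP; split; apply: (allP ends); first exact: mkE_vertex uw.
  by apply: (@mkE_vertex _ w u); rewrite mkE_sym.
- exact: mkE_sym.
- move=> t; rewrite !inE => /or4P[] /eqP->;
    [exists b | exists c | exists d | exists a]; by rewrite /= /mkE !inE eqxx ?orbT.
Qed.

Lemma cycle_controlled_bd a b c d : uniq [:: a; b; c; d] ->
  controlled (cycleG (a, b, c, d)) (cycleG (a, b, c, d)) c a b d.
Proof.
move=> abcd; apply: cycle_controlled => //.
- by move: abcd; rewrite -(rot_uniq 1).
- by move=> t; rewrite -[[:: b; c; d; a]]/(rot 1 [:: a; b; c; d]) mem_rot.
- move=> u w; rewrite /= /mkE.
  by rewrite -[[:: (b, c); _; _; _]]/(rot 1 [:: (a, b); (b, c); (c, d); (d, a)]) !mem_rot.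
Qed.

Definition face_inv (G K : graph) (C : quad) (u1 u2 : nat) : Prop :=
  let: (_, q, r, s) := C in outer_inv G K q r s u1 u2.

Lemma inC_inv n G C1 C2 : inC n G C1 C2 ->
  if n is 0 then [/\ G = cycleG C1, C2 = C1 & uniq (qverts C1)]
  else exists u1 u2, face_inv G (cycleG C1) C2 u1 u2.
Proof.
move=> GC; elim: {n G C1 C2} GC => [a b c d abcd | n G C1 o1 o2 o3 o4 v1 v3 x y z _ IH v13 d1 d3 xyz xG yG zG] //.
have [u1 [u2 [wfG ctl]]] :
    exists u1 u2, wf_graph G /\ controlled G (cycleG C1) u1 u2 v1 v3.
  case: n IH => [[-> <- abcd] | n [u1 [u2 inv]]]; last first.
    by exists u1, u2; split; [exact: out_wf inv | exact: inv_step inv v13 d1 d3].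
  move: v13; rewrite !inE !xpair_eqE => /or4P[] /andP[/eqP-> /eqP->].
  - by exists o2, o4; split; [exact: cycle_wf | exact: cycle_controlled].
  - by exists o2, o4; split; [exact: cycle_wf | exact/controlled_sym/cycle_controlled].
  - by exists o3, o1; split; [exact: cycle_wf | exact: cycle_controlled_bd].
  - by exists o3, o1; split; [exact: cycle_wf | exact/controlled_sym/cycle_controlled_bd].
by exists u1, u2; exact: (inv_ext wfG (ctl_v1G ctl) (ctl_v3G ctl) xyz xG yG zG ctl).
Qed.

(* A proper subgraph of a graph without isolated vertices misses an edge. *)
Lemma missing_edge (G H : graph) : wf_graph G -> subgraph H G -> ~ same_graph H G ->
  exists e1 e2, gE G e1 e2 /\ ~~ gE H e1 e2.
Proof.
move=> wfG [subV subE inH _ _] HnG.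
have [/hasP[a _ /hasP[b _ /andP[ab nab]]] | /hasPn noMiss] :=
  boolP (has (fun a => has (fun b => gE G a b && ~~ gE H a b) (gV G)) (gV G)).
  by exists a, b.
have GH a b : gE G a b -> gE H a b.
  move=> ab; have /andP[aG bG] := wf_edge wfG ab.
  by have /hasPn/(_ b bG) := noMiss a aG; rewrite ab negbK.
case: HnG; split=> [t | a b]; apply/idP/idP; [exact: subV | | exact: subE | exact: GH].
by move=> /(wf_nbr wfG)[b /GH /inH /andP[]].
Qed.

Lemma controlled_no_extension (G K S : graph) u1 u2 v1 v3 col :
  controlled G K u1 u2 v1 v3 -> {subset [:: u1; u2; v1; v3] <= gV S} ->
  col u1 != col u2 -> col v1 != col v3 -> ~ extends S col G.
Proof.
move=> ctl sub cu cv [c [pc agree]].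
have inS t : t \in [:: u1; u2; v1; v3] -> c t = col t by move=> /sub/agree.
move: (ctl_forced ctl pc); rewrite !inS ?inE ?eqxx ?orbT // => /(_ cu).
by apply/eqP.
Qed.

(* Control makes G critical with respect to any S containing K and both pairs:
   the coloring of G - e given by property (2) for a missing edge e witnesses
   criticality. *)
Lemma controlled_critical (G K S : graph) u1 u2 v1 v3 :
  wf_graph G -> controlled G K u1 u2 v1 v3 -> (forall a b, gE K a b -> gE S a b) ->
  {subset [:: u1; u2; v1; v3] <= gV S} -> critical G S.
Proof.
move=> wfG ctl KS sub H HG SH HnG.
have [e1 [e2 [Ge He]]] := missing_edge wfG HG HnG.
have [_ HGE _ Hsym _] := HG; have [_ SHE _ _ _] := SH.
have notK : ~~ gE K e1 e2 by apply: contra He => /KS/SHE.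
have [c [pc cu cv]] := ctl_sharp ctl Ge notK.
have pH : proper_col H c.
  move=> a b ab; apply: pc; first exact: HGE.
  apply: contraNN He; rewrite /mkE !inE !xpair_eqE.
  by case/orP=> /andP[/eqP<- /eqP<-]; rewrite // Hsym.
exists c; split; first by move=> a b /SHE; apply: pH.
split; first by exists c.
exact: controlled_no_extension ctl sub cu cv.
Qed.

Theorem mainTheorem7 (n : nat) (G : graph) (C1 C2 : quad) :
  inC n.+1 G C1 C2 ->
  critical G (gunion (cycleG C1) (cycleG C2)) /\
  (forall col : nat -> 'I_3,
     proper_col (gunion (cycleG C1) (cycleG C2)) col ->
     (forall u w, u \in qverts C1 -> w \in qverts C1 -> u != w ->
        deg G u = 2 -> deg G w = 2 -> col u != col w) ->
     (forall u w, u \in qverts C2 -> w \in qverts C2 -> u != w ->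
        deg G u = 2 -> deg G w = 2 -> col u != col w) ->
     ~ extends (gunion (cycleG C1) (cycleG C2)) col G).
Proof.
case: C1 C2 => [[[a b] c] d] [[[p q] r s]] /inC_inv[u1 [u2 [wfG qs dq ds _ ctl]]].
have sub : {subset [:: u1; u2; q; s] <= gV (gunion (cycleG (a, b, c, d)) (cycleG (p, q, r, s)))}.
  move=> t; rewrite mem_cat; move: t; apply/allP.
  by rewrite /= (ctl_u1K ctl) (ctl_u2K ctl) !inE !eqxx !orbT.
split; first by apply: (controlled_critical wfG ctl) sub => e1 e2 /= ->.
move=> col _ sep1 sep2; apply: (controlled_no_extension ctl sub).
- exact: sep1 (ctl_u1K ctl) (ctl_u2K ctl) (ctl_u12 ctl) (ctl_deg1 ctl) (ctl_deg2 ctl).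
- by apply: sep2; rewrite ?inE ?eqxx ?orbT.
Qed.
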